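(* For every positive integer $n$ and every $d\ge0$, \[ \mathrm{ch}\,\mathrm{Ind}^d1_n=\sum_{\mathbf x\in\mathbf N^n,\ |\mathbf x|=d}p_n(\mathbf x)\,t^{\mathbf x},\qquad \mathrm{ch}\,\mathrm{Ind}^d\mathrm{sgn}_n=\sum_{\mathbf x\in\mathbf N^n,\ |\mathbf x|=d}q_n(\mathbf x)\,t^{\mathbf x}. \]
   Context: $\mathbf N$ is the set of non-negative integers; for $\mathbf x\in\mathbf N^n$, $t^{\mathbf x}=t_1^{x_1}\dotsb t_n^{x_n}$ and $|\mathbf x|=x_1+\dots+x_n$. $S_n$ is regarded as the subgroup of permutation matrices in $\mathrm{GL}_n(\mathbf C)$; $1_n$ and $\mathrm{sgn}_n$ are its trivial and sign representations. $M_n$ is the space of $n\times n$ complex matrices and $P^d(M_n)$ the space of homogeneous polynomials of degree $d$ in the entries of $Q\in M_n$. For a representation $(\rho,V)$ of $S_n$, $\mathrm{Ind}^dV=\{f\in P^d(M_n)\otimes V: f(wQ)=\rho(w)f(Q)\ \forall w\in S_n,Q\in M_n\}$ (elements viewed as $V$-valued polynomial functions on $M_n$) with $\mathrm{GL}_n(\mathbf C)$-action $(\mathrm{Ind}^d\rho(g)f)(Q)=f(Qg)$. The character of a polynomial representation $\rho$ of $\mathrm{GL}_n(\mathbf C)$ is $\mathrm{ch}\,\rho(t_1,\dots,t_n)=\mathrm{trace}\,\rho(\mathrm{diag}(t_1,\dots,t_n))$. The functions $p_k,q_k:\mathbf N^n\to\mathbf N$ are defined by $\sum_{\mathbf x}\sum_k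 p_k(\mathbf x)t^{\mathbf x}u^k=\prod_{\mathbf x\in\mathbf N^n}(1-t^{\mathbf x}u)^{-1}$ and $\sum_{\mathbf x}\sum_kq_k(\mathbf x)t^{\mathbf x}u^k=\prod_{\mathbf x\in\mathbf N^n}(1+t^{\mathbf x}u)$; i.e. $p_k(\mathbf x)$ is the number of vector partitions of $\mathbf x$ (unordered decompositions into nonzero vectors of $\mathbf N^n$) with at most $k$ parts, and $q_k(\mathbf x)$ the number of vector partitions of $\mathbf x$ into exactly $k$ or $k-1$ distinct parts. *)

From HB Require Import structures.
From mathcomp Require Import all_boot all_order all_fingroup all_algebra.
From Stdlib Require Import ClassicalEpsilon.

Set Implicit Arguments.
Unset Strict Implicit.
Unset Printing Implicit Defensive.

Import GRing.Theory Num.Theory.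
Local Open Scope ring_scope.

Definition bvec (n b : nat) := {ffun 'I_n -> 'I_b.+1}.

(* p_k(x): number of vector partitions of x (multisets of nonzero vectors of
   N^n summing to x) with at most k parts.  A multiset is encoded by its
   multiplicity function; all parts and multiplicities are bounded by |x|. *)
Definition pcount (n k : nat) (x : 'I_n -> nat) : nat :=
  let b := (\sum_i x i)%N in
  #|[set mu : {ffun bvec n b -> 'I_b.+1} |
      [&& mu [ffun=> ord0] == ord0,
          [forall i, (\sum_(y : bvec n b) mu y * y i == x i)%N]
        & (\sum_(y : bvec n b) mu y <= k)%N]]|.

(* q_k(x): number of vector partitions of x into exactly k or k-1 distinct
   (nonzero) parts; a partition into distinct parts is a set of parts. *)
Definition qcount (n k : nat) (x : 'I_n -> nat) : nat :=
  let b := (\sum_i x i)%N in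
  #|[set S : {set bvec n b} |
      [&& [ffun=> ord0] \notin S,
          [forall i, (\sum_(y in S) y i == x i)%N]
        & (#|S| == k) || (#|S|.+1 == k)]]|.

(* monomials of degree d in the entries Q_ij of an n x n matrix *)
Definition DMon (n d : nat) :=
  {m : {ffun 'I_n * 'I_n -> 'I_d.+1} | (\sum_ij m ij == d)%N}.

(* P^d(M_n): coefficient vectors on the monomials of degree d *)
Definition Pd (C : fieldType) (n d : nat) := {ffun DMon n d -> C^o}.

Definition ev (C : fieldType) (n d : nat) (f : Pd C n d) (Q : 'M[C]_n) : C :=
  \sum_(m : DMon n d) f m * \prod_(ij : 'I_n * 'I_n) Q ij.1 ij.2 ^+ val m ij.

Definition rep_val (C : fieldType) (n : nat) (sg : bool) (s : 'S_n) : C :=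
  if sg then (-1) ^+ odd_perm s else 1.

Definition in_Ind (C : fieldType) (n d : nat) (sg : bool) (f : Pd C n d) : Prop :=
  forall (s : 'S_n) (Q : 'M[C]_n),
    ev f (perm_mx s *m Q) = rep_val C sg s * ev f Q.

Definition Ind (C : fieldType) (n d : nat) (sg : bool) : {vspace Pd C n d} :=
  epsilon (inhabits 0%VS)
    (fun U : {vspace Pd C n d} => forall f, f \in U <-> @in_Ind C n d sg f).

Definition act (C : fieldType) (n d : nat) (g : 'M[C]_n) (f : Pd C n d) : Pd C n d :=
  epsilon (inhabits 0) (fun f' : Pd C n d => forall Q, ev f' Q = ev f (Q *m g)).

Definition trace_on (K : fieldType) (vT : vectType K) (U : {vspace vT})
    (f : vT -> vT) : K :=
  \sum_(i < \dim U) coord (vbasis U) i (f (vbasis U)`_i).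

Definition ch_Ind (C : fieldType) (n d : nat) (sg : bool) (t : 'I_n -> C) : C :=
  trace_on (Ind C n d sg) (@act C n d (diag_mx (\row_i t i))).

Definition wsum (C : fieldType) (n d : nat) (c : ('I_n -> nat) -> nat)
    (t : 'I_n -> C) : C :=
  \sum_(x : {ffun 'I_n -> 'I_d.+1} | (\sum_i (x i : nat) == d)%N)
     (c (fun i => x i : nat))%:R * \prod_i t i ^+ x i.

From Pilot Require Import Defs.
From HB Require Import structures.
From mathcomp Require Import all_boot all_order all_fingroup all_algebra.
From Stdlib Require Import ClassicalEpsilon.

(* Identify P^d(M_n) with coefficient vectors indexed by the exponent
   matrices m of its monomials; S_n permutes the rows of m.  In characteristic
   0 a polynomial is determined by its values, so f lies in Ind^d rho iff
   f(m^s) = rho(s) f(m) for all m and s.  The torus element diag(t) multiplies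
   the coefficient of m by t^(column sums of m), so the character is the trace
   of this diagonal map composed with the symmetrizer, namely the sum over m
   of t^(colsum m) (1/n!) sum_{s in Stab m} rho(s).
   For rho trivial, the matrices with column sums x contribute, by Burnside,
   n! times the number of S_n-orbits of such matrices, i.e. of multisets of n
   rows summing to x: the vector partitions of x into at most n nonzero parts.
   For rho = sgn, the inner sum is 1 if the rows of m are distinct and 0
   otherwise (the transposition of two equal rows is an odd element of the
   stabilizer); orbits of matrices with distinct rows are sets of n distinct
   rows, i.e. partitions of x into n or n - 1 distinct nonzero parts. *)

Set Implicit Arguments.
Unset Strict Implicit.
Unset Printing Implicit Defensive.

Import GRing.Theory.
Local Open Scope ring_scope.

Lemma digits_inj (B K : nat) (h1 h2 : 'I_K -> nat) :
  (forall k, h1 k < B)%N -> (forall k, h2 k < B)%N ->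
  (\sum_k h1 k * B ^ k)%N = (\sum_k h2 k * B ^ k)%N -> h1 =1 h2.
Proof.
elim: K h1 h2 => [|K IHK] h1 h2 h1B h2B; first by move=> _ [].
have digitsS (h : 'I_K.+1 -> nat) : (\sum_k h k * B ^ k =
    h ord0 + B * \sum_(k < K) h (lift ord0 k) * B ^ k)%N.
  rewrite big_ord_recl muln1 big_distrr; congr (_ + _)%N.
  by apply: eq_bigr => k _; rewrite expnS mulnCA.
rewrite !digitsS => eq_digits.
have eq0 : h1 ord0 = h2 ord0.
  have := congr1 (modn^~ B) eq_digits.
  by rewrite !(addnC (_ ord0)) !(mulnC B) !modnMDl !modn_small.
have B_gt0 : (0 < B)%N by apply: leq_ltn_trans (h1B ord0).
move: eq_digits; rewrite eq0 => /addnI /eqP; rewrite eqn_pmul2l // => /eqP.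
move/(IHK _ _ (fun k => h1B (lift ord0 k)) (fun k => h2B (lift ord0 k))).
by move=> eq_lift k; case: (unliftP ord0 k) => [k'|] ->.
Qed.

Lemma digits_enum_inj (I : finType) (B : nat) (h1 h2 : I -> nat) :
  (forall i, h1 i < B)%N -> (forall i, h2 i < B)%N ->
  (\sum_i h1 i * B ^ enum_rank i)%N = (\sum_i h2 i * B ^ enum_rank i)%N ->
  h1 =1 h2.
Proof.
move=> h1B h2B.
have digitsE (h : I -> nat) : (\sum_i h i * B ^ enum_rank i =
    \sum_(k < #|I|) h (enum_val k) * B ^ k)%N.
  rewrite (reindex _ (onW_bij _ (enum_val_bij I))).
  by apply: eq_bigr => k _; rewrite enum_valK.
rewrite !digitsE => /digits_inj eq_digits i; rewrite -(enum_rankK i).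
by apply: eq_digits => k; [apply: h1B | apply: h2B].
Qed.

Lemma pchar0_natr_inj (R : fieldType) :
  [pchar R] =i pred0 -> injective (fun k : nat => k%:R : R).
Proof.
move=> /pcharf0P natr0 i j /= eq_ij.
wlog le_ij : i j eq_ij / (i <= j)%N.
  by move=> WL; case/orP: (leq_total i j) => /WL; [apply | move=> <-].
apply/eqP; rewrite eqn_leq le_ij -subn_eq0 -(natr0 (j - i)%N) natrB //.
by rewrite eq_ij subrr eqxx.
Qed.

Lemma big_seq_count (T : finType) (r : seq T) (F : T -> nat) :
  (\sum_(v <- r) F v = \sum_y count_mem y r * F y)%N.
Proof.
elim: r => [|a r IHr]; first by rewrite big_nil big1.
rewrite big_cons IHr (bigD1 a) //= [in RHS](bigD1 a) //= eqxx add1n mulSn addnA.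
by congr (_ + _)%N; apply: eq_bigr => y /negbTE ya; rewrite eq_sym ya.
Qed.

Lemma count_mem_flatten_nseq (T : finType) (mu : T -> nat) y :
  count_mem y (flatten [seq nseq (mu z) z | z : T]) = mu y.
Proof.
rewrite count_flatten sumnE big_map big_image /= (bigD1 y) //= big1.
  by rewrite count_nseq /= eqxx mul1n addn0.
by move=> z zy; rewrite count_nseq /= (negbTE zy).
Qed.

Lemma size_flatten_nseq (T : finType) (mu : T -> nat) :
  size (flatten [seq nseq (mu z) z | z : T]) = (\sum_z mu z)%N.
Proof.
rewrite size_flatten sumnE /shape big_map big_image /=.
by apply: eq_bigr => z _; rewrite size_nseq.
Qed.

Lemma perm_eq_count_neq (T : finType) (y0 : T) (r1 r2 : seq T) :
  size r1 = size r2 ->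
  (forall y, y != y0 -> count_mem y r1 = count_mem y r2) -> perm_eq r1 r2.
Proof.
move=> eq_size eq_count; apply/allP => y _; apply/eqP.
have [->|] := eqVneq y y0; last exact: eq_count.
have count_y0 r :
    count_mem y0 r = (size r - \sum_(y | y != y0) count_mem y r)%N.
  rewrite -sum1_size big_seq_count (bigD1 y0) //= muln1.
  by under [X in (_ + X - _)%N]eq_bigr => z _ do rewrite muln1; rewrite addnK.
by rewrite !count_y0 eq_size; congr (_ - _)%N; apply: eq_bigr.
Qed.

(** * Exponent matrices and their rows *)

Section ExponentMatrices.

Variables n d : nat.
Implicit Types (m : DMon n d) (s : 'S_n).
Local Open Scope group_scope.

Lemma rperm_subproof m s :
  (\sum_ij ([ffun ij : 'I_n * 'I_n => val m (s^-1 ij.1, ij.2)] ij : nat)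
     == d)%N.
Proof.
have inj_s : injective (fun ij : 'I_n * 'I_n => (s^-1 ij.1, ij.2)).
  by move=> [i j] [k l] [/perm_inj -> ->].
rewrite -[X in _ == X](eqP (valP m)) [X in _ == X](reindex_inj inj_s).
by apply/eqP/eq_bigr => ij _; rewrite ffunE.
Qed.

Definition rperm m s : DMon n d :=
  exist _ [ffun ij => val m (s^-1 ij.1, ij.2)] (rperm_subproof m s).

Lemma rpermE m s i j : val (rperm m s) (i, j) = val m (s^-1 i, j).
Proof. by rewrite ffunE. Qed.

Lemma rperm1 m : rperm m 1 = m.
Proof.
by apply: val_inj; apply/ffunP => -[i j]; rewrite rpermE invg1 perm1.
Qed.

Lemma rpermM m s r : rperm m (s * r) = rperm (rperm m s) r.
Proof.
by apply: val_inj; apply/ffunP => -[i j]; rewrite !rpermE invMg permM.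
Qed.

Lemma rpermKV m s : rperm (rperm m s^-1) s = m.
Proof. by rewrite -rpermM mulVg rperm1. Qed.

Definition rperm_action := TotalAction rperm1 rpermM.

Definition bvec0 : bvec n d := [ffun=> ord0].

Definition mrow m i : bvec n d := [ffun j => val m (i, j)].

Definition mrows m : n.-tuple (bvec n d) := [tuple mrow m i | i < n].

Lemma big_mrows (F : bvec n d -> nat) m :
  (\sum_(v <- mrows m) F v = \sum_i F (mrow m i))%N.
Proof. by rewrite big_tuple; apply: eq_bigr => i _; rewrite tnth_mktuple. Qed.

Lemma mrows_inj : injective mrows.
Proof.
move=> m1 m2 eq_rows; apply: val_inj; apply/ffunP => -[i j].
have := congr1 (fun r => tnth r i) eq_rows; rewrite !tnth_mktuple.
by move/ffunP/(_ j); rewrite !ffunE.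
Qed.

Lemma mrows_rperm m s :
  mrows (rperm m s) = [tuple tnth (mrows m) (s^-1 i) | i < n].
Proof.
apply: eq_from_tnth => i; rewrite !tnth_mktuple.
by apply/ffunP => j; rewrite !ffunE.
Qed.

Lemma perm_mrows_rperm m s : perm_eq (mrows (rperm m s)) (mrows m).
Proof. by apply/tuple_permP; exists s^-1; rewrite mrows_rperm. Qed.

Lemma perm_mrows_orbit m1 m2 :
  perm_eq (mrows m2) (mrows m1) -> m2 \in orbit rperm_action setT m1.
Proof.
case/tuple_permP => p eq_rows; apply/orbitP; exists p^-1; rewrite ?inE //=.
apply: mrows_inj; apply: eq_from_tnth => i.
rewrite (mrows_rperm m1 p^-1) tnth_mktuple invgK.
by rewrite [RHS](tnth_nth bvec0) eq_rows -(tnth_nth bvec0) [RHS]tnth_mktuple.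
Qed.

Lemma sum_mrows m : (\sum_(v <- mrows m) \sum_j v j)%N = d.
Proof.
rewrite big_mrows -[RHS](eqP (valP m)) pair_big.
by apply: eq_bigr => -[i j] _; rewrite ffunE.
Qed.

Lemma colsum_subproof m j : (\sum_i val m (i, j) < d.+1)%N.
Proof.
rewrite ltnS -[X in (_ <= X)%N](sum_mrows m) big_mrows exchange_big.
rewrite [X in (_ <= X)%N](bigD1 j) //= (leq_trans _ (leq_addr _ _)) //.
by apply: leq_sum => i _; rewrite ffunE.
Qed.

Definition colsum m : {ffun 'I_n -> 'I_d.+1} :=
  [ffun j => Ordinal (colsum_subproof m j)].

Lemma colsumE m j : colsum m j = (\sum_i val m (i, j))%N :> nat.
Proof. by rewrite ffunE. Qed.

Lemma colsum_mrows m j : colsum m j = (\sum_(v <- mrows m) v j)%N :> nat.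
Proof. by rewrite colsumE big_mrows; apply: eq_bigr => i _; rewrite ffunE. Qed.

Lemma sum_colsum m : (\sum_j colsum m j)%N = d.
Proof.
rewrite -[RHS](sum_mrows m) exchange_big.
by apply: eq_bigr => j _; rewrite colsum_mrows.
Qed.

Lemma colsum_rperm m s : colsum (rperm m s) = colsum m.
Proof.
apply/ffunP => j; apply: val_inj; rewrite /= !colsum_mrows.
exact/perm_big/perm_mrows_rperm.
Qed.

Lemma exists_mrows (r : seq (bvec n d)) (x : {ffun 'I_n -> 'I_d.+1}) :
  size r = n -> (\sum_j x j)%N = d -> (forall j, \sum_(v <- r) v j = x j)%N ->
  exists2 m, mrows m = r :> seq _ & colsum m = x.
Proof.
move=> size_r sum_x sum_r.
pose e : {ffun 'I_n * 'I_n -> 'I_d.+1} :=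
  [ffun ij : 'I_n * 'I_n => nth bvec0 r ij.1 ij.2].
have sum_e : (\sum_ij (e ij : nat) == d)%N.
  apply/eqP; rewrite -[RHS]sum_x.
  under [RHS]eq_bigr => j _ do rewrite -sum_r (big_nth bvec0) size_r big_mkord.
  by rewrite exchange_big pair_big; apply: eq_bigr => -[i j] _; rewrite ffunE.
have rows_e : mrows (exist _ e sum_e) = r :> seq _.
  rewrite -[RHS](mkseq_nth bvec0) size_r /mkseq -val_enum_ord -map_comp.
  by apply: eq_map => i; apply/ffunP => j; rewrite !ffunE.
exists (exist _ e sum_e) => //; apply/ffunP => j; apply: val_inj.
by rewrite /= colsum_mrows rows_e sum_r.
Qed.

End ExponentMatrices.

Arguments bvec0 {n d}.

(** * Polynomial functions on M_n *)

Section PolynomialFunctions.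

Variables (C : fieldType) (n d : nat).
Implicit Types (f g : Pd C n d) (m : DMon n d) (Q : 'M[C]_n).

Definition monomial m Q : C := \prod_ij Q ij.1 ij.2 ^+ val m ij.

Lemma evE f Q : ev f Q = \sum_m f m * monomial m Q.
Proof. by []. Qed.

Lemma evB f g Q : ev (f - g) Q = ev f Q - ev g Q.
Proof.
by rewrite !evE -sumrB; apply: eq_bigr => m _; rewrite !ffunE mulrBl.
Qed.

Lemma evZ a f Q : ev (a *: f) Q = a * ev f Q.
Proof.
by rewrite !evE mulr_sumr; apply: eq_bigr => m _; rewrite !ffunE mulrA.
Qed.

Lemma monomial_perm_mx m s Q :
  monomial m (perm_mx s *m Q) = monomial (rperm m s) Q.
Proof.
have inj_s : injective (fun ij : 'I_n * 'I_n => (s ij.1, ij.2)).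
  by move=> [i j] [k l] [/perm_inj -> ->].
rewrite /monomial [RHS](reindex_inj inj_s); apply: eq_bigr => -[i j] _ /=.
by rewrite -row_permE mxE rpermE permK.
Qed.

Lemma ev_perm_mx f s Q :
  ev f (perm_mx s *m Q) = ev [ffun m => f (rperm m s^-1%g)] Q.
Proof.
rewrite !evE (reindex_inj (act_inj (rperm_action n d) s^-1%g)) /=.
by apply: eq_bigr => m _; rewrite ffunE monomial_perm_mx rpermKV.
Qed.

Definition tweight (t : 'I_n -> C) m : C := \prod_j t j ^+ colsum m j.

Lemma tweight_rperm t m s : tweight t (rperm m s) = tweight t m.
Proof. by rewrite /tweight colsum_rperm. Qed.

Lemma monomial_mul_diag t m Q :
  monomial m (Q *m diag_mx (\row_j t j)) = tweight t m * monomial m Q.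
Proof.
rewrite /monomial /tweight mul_mx_diag mulrC.
under eq_bigr => ij _ do rewrite !mxE exprMn.
rewrite big_split /=; congr (_ * _).
under [RHS]eq_bigr => j _ do rewrite colsumE -prodrXr.
by rewrite [RHS]exchange_big [RHS]pair_big; apply: eq_bigr => -[i j].
Qed.

Definition diag_scale t f : Pd C n d := [ffun m => tweight t m * f m].

Fact diag_scale_is_linear t : linear (diag_scale t).
Proof. by move=> a f g; apply/ffunP => m; rewrite !ffunE mulrDr mulrCA. Qed.

HB.instance Definition _ t :=
  GRing.isLinear.Build C (Pd C n d) (Pd C n d) _ (diag_scale t)
    (diag_scale_is_linear t).

Hypothesis C0 : [pchar C] =i pred0.

Lemma ev_eq0 f : (forall Q, ev f Q = 0) -> f = 0.
Proof.
(* Kronecker substitution: putting Q_ij := z ^+ (d+1)^(rank (i, j)) turns ev f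
   into a polynomial in z whose exponents are base-(d+1) numerals, hence
   distinct for distinct monomials. *)
move=> f0.
pose kexp m := (\sum_ij val m ij * d.+1 ^ enum_rank ij)%N.
have kexp_inj : injective kexp.
  move=> m1 m2 /digits_enum_inj eq_m.
  apply: val_inj; apply/ffunP => ij; apply: val_inj.
  by apply: eq_m => ij'; apply: ltn_ord.
pose p : {poly C} := \sum_m f m *: 'X^(kexp m).
have p_root z : root p z.
  apply/eqP; rewrite -(f0 (\matrix_(i, j) z ^+ (d.+1 ^ enum_rank (i, j)))).
  rewrite horner_sum; apply: eq_bigr => m _; rewrite hornerZ hornerXn.
  congr (_ * _); rewrite -prodrXr; apply: eq_bigr => -[i j] _.
  by rewrite mxE -exprM mulnC.
have {p_root} p0 : p = 0.
  apply: (@roots_geq_poly_eq0 _ _ [seq k%:R | k <- iota 0 (size p)]).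
  - by apply/allP => z _; apply: p_root.
  - by rewrite map_inj_uniq ?iota_uniq //; apply: pchar0_natr_inj.
  - by rewrite size_map size_iota.
apply/ffunP => m; have := congr1 (fun q : {poly C} => q`_(kexp m)) p0.
rewrite coef0 coef_sum (bigD1 m) //= coefZ coefXn eqxx mulr1 big1 ?addr0.
  by rewrite ffunE.
move=> m' m'm.
by rewrite coefZ coefXn (inj_eq kexp_inj) eq_sym (negbTE m'm) mulr0.
Qed.

Lemma ev_eq f g : (forall Q, ev f Q = ev g Q) -> f = g.
Proof. by move=> fg; apply/subr0_eq/ev_eq0 => Q; rewrite evB fg subrr. Qed.

Lemma act_diag t f : Defs.act (diag_mx (\row_i t i)) f = diag_scale t f.
Proof.
have scaleP Q : ev (diag_scale t f) Q = ev f (Q *m diag_mx (\row_i t i)).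
  rewrite !evE; apply: eq_bigr => m _.
  by rewrite ffunE monomial_mul_diag mulrCA mulrA.
apply: ev_eq => Q; rewrite scaleP.
apply: (epsilon_spec (inhabits 0)
  (fun f' => forall Q, ev f' Q = ev f (Q *m diag_mx (\row_i t i)))).
by exists (diag_scale t f).
Qed.

End PolynomialFunctions.

(** * The character of Ind^d rho *)

Section TraceOnFfun.

Variables (K : fieldType) (I : finType).
Implicit Types (u : {ffun I -> K^o}).

Definition delta i : {ffun I -> K^o} := [ffun j => (j == i)%:R].

Lemma scaler_regE (a x : K) : a *: (x : K^o) = a * x.
Proof. by []. Qed.

Lemma ffun_sum_delta u : u = \sum_i u i *: delta i.
Proof.
apply/ffunP => i; rewrite sum_ffunE (bigD1 i) //= big1 => [|j ji].
  by rewrite !ffunE scaler_regE eqxx mulr1 addr0.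
by rewrite !ffunE scaler_regE eq_sym (negbTE ji) mulr0.
Qed.

Lemma trace_on_ffun (U : {vspace {ffun I -> K^o}})
    (T : {ffun I -> K^o} -> {ffun I -> K^o})
    (h : {linear {ffun I -> K^o} -> {ffun I -> K^o}}) :
  (forall u, h u \in U) -> {in U, T =1 h} ->
  trace_on U T = \sum_i h (delta i) i.
Proof.
move=> hU Th; rewrite /trace_on.
have basisU (k : 'I_(\dim U)) : (vbasis U)`_k \in U.
  by apply/vbasis_mem/mem_nth; rewrite size_tuple.
transitivity (\sum_(k < \dim U) \sum_i
    (vbasis U)`_k i * coord (vbasis U) k (h (delta i))).
  apply: eq_bigr => k _; rewrite Th // {1}[(vbasis U)`_k]ffun_sum_delta.
  by rewrite !linear_sum; apply: eq_bigr => i _; rewrite !linearZ.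
rewrite exchange_big; apply: eq_bigr => i _.
rewrite {2}(coord_vbasis (hU (delta i))) sum_ffunE.
by apply: eq_bigr => k _; rewrite ffunE scaler_regE mulrC.
Qed.

End TraceOnFfun.

Section Induced.

Variables (C : fieldType) (n d : nat) (sg : bool).
Hypothesis C0 : [pchar C] =i pred0.
Local Notation rho := (rep_val C sg).
Local Notation stab m := ('C[m | rperm_action n d])%g.
Implicit Types (f : Pd C n d) (m : DMon n d) (s r : 'S_n).

Lemma rep_valM s r : rho (s * r)%g = rho s * rho r.
Proof.
by rewrite /rep_val; case: sg; rewrite ?mulr1 // odd_permM signr_addb.
Qed.

Lemma rep_valV s : rho s^-1%g = rho s.
Proof. by rewrite /rep_val odd_permV. Qed.

Lemma rep_val_sqr s : rho s * rho s = 1.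
Proof. by rewrite /rep_val; case: sg; rewrite ?mulr1 // -expr2 sqrr_sign. Qed.

Definition semi_invariant f := forall m s, f (rperm m s) = rho s * f m.

Lemma in_IndP f : in_Ind sg f <-> semi_invariant f.
Proof.
split=> [f_Ind m s | f_inv s Q].
  have eq_f : [ffun m => f (rperm m s)] = rho s *: f.
    apply: (ev_eq C0) => Q; rewrite evZ.
    have := ev_perm_mx f s^-1%g Q; rewrite invgK => <-.
    by rewrite f_Ind rep_valV.
  by have := congr1 (fun g : Pd C n d => g m) eq_f; rewrite !ffunE scaler_regE.
rewrite ev_perm_mx -evZ; congr ev; apply/ffunP => m.
by rewrite !ffunE scaler_regE f_inv rep_valV.
Qed.

Definition symmetrize f : Pd C n d :=
  [ffun m => n`!%:R^-1 * \sum_s rho s * f (rperm m s)].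

Fact symmetrize_is_linear : linear symmetrize.
Proof.
move=> a f g; apply/ffunP => m.
rewrite !ffunE scaler_regE mulrCA -mulrDr; congr (_ * _).
rewrite mulr_sumr -big_split; apply: eq_bigr => s _.
by rewrite !ffunE scaler_regE mulrDr mulrCA.
Qed.

HB.instance Definition _ :=
  GRing.isLinear.Build C (Pd C n d) (Pd C n d) _ symmetrize
    symmetrize_is_linear.

Lemma symmetrize_semi_invariant f : semi_invariant (symmetrize f).
Proof.
move=> m r; rewrite !ffunE mulrCA; congr (_ * _).
rewrite mulr_sumr (reindex_inj (mulgI r^-1%g)); apply: eq_bigr => s _.
by rewrite -rpermM mulKVg rep_valM rep_valV mulrA.
Qed.

Lemma semi_invariant_diag_scale t f :
  semi_invariant f -> semi_invariant (diag_scale t f).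
Proof. by move=> f_inv m s; rewrite !ffunE f_inv tweight_rperm mulrCA. Qed.

Lemma natr_fact_neq0 : n`!%:R != 0 :> C.
Proof. by move/pcharf0P: C0 => ->; rewrite -lt0n fact_gt0. Qed.

Lemma symmetrize_id f : semi_invariant f -> symmetrize f = f.
Proof.
move=> f_inv; apply/ffunP => m; rewrite ffunE.
under eq_bigr => s _ do rewrite f_inv mulrA rep_val_sqr mul1r.
by rewrite sumr_const card_Sn -(mulr_natl (f m : C)) mulKf ?natr_fact_neq0.
Qed.

Lemma mem_Ind f : f \in Ind C n d sg <-> semi_invariant f.
Proof.
have memU g : g \in (linfun symmetrize @: fullv)%VS <-> in_Ind sg g.
  rewrite in_IndP; split=> [/memv_imgP[u _ ->] | g_inv].
    by rewrite lfunE; apply: symmetrize_semi_invariant.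
  by rewrite -(symmetrize_id g_inv) -lfunE memv_img ?memvf.
rewrite -in_IndP; move: f; apply: (epsilon_spec (inhabits 0%VS)
  (fun U : {vspace Pd C n d} => forall f, f \in U <-> in_Ind sg f)).
by exists (linfun symmetrize @: fullv)%VS.
Qed.

Lemma ch_IndE t :
  @ch_Ind C n d sg t = \sum_m tweight t m *
    (n`!%:R^-1 * \sum_(s in stab m) rho s).
Proof.
rewrite /ch_Ind (trace_on_ffun (h := diag_scale t \o symmetrize)).
- apply: eq_bigr => m _; rewrite /= ffunE [symmetrize _ _]ffunE.
  congr (_ * (_ * _)); rewrite [RHS]big_mkcond; apply: eq_bigr => s _.
  rewrite ffunE (sameP astab1P eqP) /=.
  by case: eqP; rewrite ?mulr1 ?mulr0.
- move=> u; apply/mem_Ind/semi_invariant_diag_scale.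
  exact: symmetrize_semi_invariant.
- by move=> u /mem_Ind u_inv; rewrite /= (act_diag C0) symmetrize_id.
Qed.

Lemma ch_Ind_wsum t (c : ('I_n -> nat) -> nat) :
  (forall x : {ffun 'I_n -> 'I_d.+1}, (\sum_i x i)%N = d ->
     \sum_(m | colsum m == x) \sum_(s in stab m) rho s
       = (n`! * c (fun i => x i : nat))%:R) ->
  @ch_Ind C n d sg t = @wsum C n d c t.
Proof.
move=> sum_stab; rewrite ch_IndE /wsum.
rewrite (partition_big (@colsum n d) (fun x => \sum_i x i == d)%N) => [|m _];
  last by rewrite sum_colsum.
apply: eq_bigr => x /eqP sum_x.
rewrite (eq_bigl (fun m => colsum m == x)) //.
rewrite (eq_bigr (fun m => \prod_i t i ^+ x i *
    (n`!%:R^-1 * \sum_(s in stab m) rho s))) => [|m /eqP <-] //.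
by rewrite -!mulr_sumr sum_stab // natrM mulKf ?natr_fact_neq0 // mulrC.
Qed.

End Induced.

(** * Counting orbits *)

Section OrbitCounting.

Variables (aT : finGroupType) (T : finType) (to : {action aT &-> T}).
Local Open Scope group_scope.

Lemma acts_invariant_set (P : pred T) :
  (forall x a, P (to x a) = P x) -> [acts setT, on [set x | P x] | to].
Proof. by move=> PJ; apply/actsP => a _ x; rewrite !inE PJ. Qed.

Lemma sum_card_astab1 (S : {set T}) :
  [acts setT, on S | to] ->
  (\sum_(x in S) #|'C[x | to]| = #|orbit to setT @: S| * #|aT|)%N.
Proof.
move=> actsS; rewrite -cardsT -(Frobenius_Cauchy actsS).
under eq_bigr => x _ do rewrite -sum1_card.
rewrite (exchange_big_dep xpredT) //=; apply: eq_big => [a | a _].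
  by rewrite inE.
rewrite -sum1_card; apply: eq_bigl => x.
by rewrite [RHS]inE (sameP astab1P afix1P).
Qed.

Lemma card_orbits_invariant (R : finType) (S : {set T}) (Phi : T -> R) :
  (forall x a, Phi (to x a) = Phi x) ->
  {in S &, forall x y, Phi x = Phi y -> y \in orbit to setT x} ->
  #|orbit to setT @: S| = #|Phi @: S|.
Proof.
move=> PhiJ PhiP.
have Phi_orbit x : Phi @: orbit to setT x = [set Phi x].
  apply/setP => r; rewrite inE; apply/imsetP/eqP => [[y /orbitP[a _ <-] ->]|->].
    exact: PhiJ.
  by exists x; first exact: orbit_refl.
rewrite -(card_in_imset (f := fun O : {set T} => Phi @: O)); last first.
  move=> _ _ /imsetP[x Sx ->] /imsetP[y Sy ->]; rewrite !Phi_orbit.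
  by move/set1_inj/(PhiP _ _ Sx Sy)/orbit_eqP.
rewrite -imset_comp (eq_in_imset (g := fun x => [set Phi x])) => [|x _];
  last exact: Phi_orbit.
by rewrite imset_comp card_imset //; apply: set1_inj.
Qed.

End OrbitCounting.

(** * Vector partitions as orbits of exponent matrices *)

Section VectorPartitions.

Variables n d : nat.
Implicit Types (m : DMon n d) (s : 'S_n) (x : {ffun 'I_n -> 'I_d.+1}).
Local Notation rperm_action := (rperm_action n d).
Local Notation stab m := ('C[m | rperm_action])%g.

Lemma bvec0E j : (@bvec0 n d) j = ord0.
Proof. by rewrite ffunE. Qed.

Lemma sum_bvec_gt0 (y : bvec n d) : y != bvec0 -> (0 < \sum_j y j)%N.
Proof.
rewrite lt0n sum_nat_eq0; apply: contra => /forallP y_0.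
by apply/eqP/ffunP => j; apply/val_inj/eqP; rewrite bvec0E; apply: y_0.
Qed.

Lemma count_mrows_le m y : y != bvec0 -> (count_mem y (mrows m) <= d)%N.
Proof.
move=> y0; rewrite -[X in (_ <= X)%N](sum_mrows m) big_seq_count (bigD1 y) //=.
by rewrite (leq_trans _ (leq_addr _ _)) // leq_pmulr // sum_bvec_gt0.
Qed.

(* Zero rows only pad an exponent matrix to n rows; they are not parts. *)
Definition row_mult m : {ffun bvec n d -> 'I_d.+1} :=
  [ffun y => inord ((y != bvec0) * count_mem y (mrows m))].

Lemma row_multE m y : y != bvec0 -> row_mult m y = count_mem y (mrows m) :> nat.
Proof. by move=> y0; rewrite ffunE y0 mul1n inordK // ltnS count_mrows_le. Qed.

Lemma row_mult0 m : row_mult m bvec0 = ord0.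
Proof. by apply: val_inj; rewrite ffunE eqxx /= inordK. Qed.

Lemma row_mult_rperm m s : row_mult (rperm m s) = row_mult m.
Proof.
by apply/ffunP => y; rewrite !ffunE (seq.permP (perm_mrows_rperm m s)).
Qed.

Lemma row_mult_orbit m1 m2 :
  row_mult m1 = row_mult m2 -> m2 \in orbit rperm_action setT m1.
Proof.
move=> eq_mult; apply: perm_mrows_orbit; apply: (@perm_eq_count_neq _ bvec0).
  by rewrite !size_tuple.
by move=> y y0; rewrite -!row_multE // eq_mult.
Qed.

Definition mult_partitions x : {set {ffun bvec n d -> 'I_d.+1}} :=
  [set mu : {ffun bvec n d -> 'I_d.+1} | [&& mu bvec0 == ord0,
                [forall i, \sum_y mu y * y i == x i]
              & \sum_y mu y <= n]%N].

Lemma pcountE x : (\sum_i x i)%N = d ->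
  pcount n (fun i => x i : nat) = #|mult_partitions x|.
Proof. by rewrite /pcount /= => ->. Qed.

Lemma row_mult_partition m : row_mult m \in mult_partitions (colsum m).
Proof.
rewrite inE row_mult0 eqxx /=; apply/andP; split.
  apply/forallP => j; apply/eqP; rewrite colsum_mrows [RHS]big_seq_count.
  apply: eq_bigr => y _.
  have [->|y0] := eqVneq y bvec0; first by rewrite bvec0E !muln0.
  by rewrite row_multE.
rewrite -[X in (_ <= X)%N](size_tuple (mrows m)) -sum1_size.
rewrite [X in (_ <= X)%N]big_seq_count.
apply: leq_sum => y _; rewrite muln1.
by have [->|y0] := eqVneq y bvec0; rewrite ?row_mult0 ?row_multE.
Qed.

Lemma mult_partitions_row_mult x mu : (\sum_i x i)%N = d ->
  mu \in mult_partitions x -> exists2 m, colsum m = x & row_mult m = mu.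
Proof.
move=> sum_x; rewrite inE => /and3P[/eqP mu0 /forallP sum_mu le_mu_n].
pose r := flatten [seq nseq (mu y) y | y : bvec n d] ++
          nseq (n - \sum_y mu y) bvec0.
have count_r y : y != bvec0 -> count_mem y r = mu y.
  move=> y0; rewrite count_cat count_mem_flatten_nseq count_nseq /=.
  by rewrite eq_sym (negbTE y0) mul0n addn0.
have [|j|m rows_m colsum_m] := @exists_mrows n d r x _ sum_x.
- by rewrite size_cat size_flatten_nseq size_nseq subnKC.
- rewrite big_seq_count -(eqP (sum_mu j)); apply: eq_bigr => y _.
  have [->|y0] := eqVneq y bvec0; first by rewrite bvec0E !muln0.
  by rewrite count_r.
exists m => //; apply/ffunP => y; have [->|y0] := eqVneq y bvec0.
  by rewrite row_mult0 mu0.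
by apply: val_inj; rewrite /= row_multE // rows_m count_r.
Qed.

Lemma sum_card_astab1_colsum x : (\sum_i x i)%N = d ->
  (\sum_(m | colsum m == x) #|stab m| = n`! * pcount n (fun i => x i : nat))%N.
Proof.
move=> sum_x; pose S := [set m | colsum m == x].
rewrite (eq_bigl [in S]) => [|m]; last by rewrite inE.
rewrite sum_card_astab1; last first.
  by apply: acts_invariant_set => m s; rewrite /= colsum_rperm.
rewrite card_Sn mulnC (card_orbits_invariant (Phi := row_mult)).
- congr (_ * _)%N; rewrite pcountE //; apply: eq_card => mu.
  apply/imsetP/idP => [[m]|].
    by rewrite inE => /eqP <- ->; apply: row_mult_partition.
  case/mult_partitions_row_mult => // m colsum_m <-.
  by exists m; rewrite // inE colsum_m.
- by move=> m s; apply: row_mult_rperm.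
- by move=> m1 m2 _ _; apply: row_mult_orbit.
Qed.

Lemma astab1_uniq_mrows m : uniq (mrows m) -> stab m = 1%g.
Proof.
move=> /tuple_uniqP inj_rows; apply/trivgP/subsetP => s /astab1P /= fix_s.
rewrite inE; apply/eqP/permP => i; rewrite perm1; apply: inj_rows.
have := congr1 (fun m' => tnth (mrows m') (s i)) fix_s.
by rewrite mrows_rperm tnth_mktuple permK.
Qed.

Lemma sum_sign_astab1 (C : fieldType) : [pchar C] =i pred0 -> forall m,
  \sum_(s in stab m) rep_val C true s = (uniq (mrows m))%:R.
Proof.
move=> /pcharf0P natr0 m.
have [uniq_rows|] := boolP (uniq (mrows m)).
  by rewrite astab1_uniq_mrows // big_set1 /rep_val odd_perm1.
case/(uniqPn bvec0) => i [j [lt_ij lt_jn eq_ij]]; rewrite size_tuple in lt_jn.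
pose i' := Ordinal (ltn_trans lt_ij lt_jn); pose j' := Ordinal lt_jn.
have ne_ij : i' != j' by rewrite -val_eqE /= neq_ltn lt_ij.
pose tau := tperm i' j'.
have tau_stab : tau \in stab m.
  apply/astab1P/mrows_inj; apply: eq_from_tnth => k.
  have eq_rows : tnth (mrows m) i' = tnth (mrows m) j'.
    by rewrite !(tnth_nth bvec0).
  rewrite /= mrows_rperm tnth_mktuple tpermV.
  by case: tpermP => [->|->|]; rewrite ?eq_rows.
set S := \sum_(s in _) _; have SN : S = - S.
  rewrite {1}/S (reindex_inj (mulgI tau)) -sumrN /=.
  apply: eq_big => [s | s _]; first by rewrite groupMl.
  by rewrite /rep_val odd_permM odd_tperm ne_ij signr_addb expr1 mulN1r.
have : S *+ 2 = 0 by rewrite mulr2n {1}SN addNr.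
by move/eqP; rewrite -(mulr_natl S) mulf_eq0 natr0 /= => /eqP.
Qed.

Definition set_partitions x : {set {set bvec n d}} :=
  [set S : {set bvec n d} | [&& bvec0 \notin S,
               [forall i, \sum_(y in S) y i == x i]%N
             & (#|S| == n) || (#|S|.+1 == n)]].

Lemma qcountE x : (\sum_i x i)%N = d ->
  qcount n (fun i => x i : nat) = #|set_partitions x|.
Proof. by rewrite /qcount /= => ->. Qed.

Definition row_set m : {set bvec n d} :=
  [set y | (y \in mrows m) && (y != bvec0)].

Lemma row_set_rperm m s : row_set (rperm m s) = row_set m.
Proof. by apply/setP => y; rewrite !inE (perm_mem (perm_mrows_rperm m s)). Qed.

Lemma card_row_set m :
  uniq (mrows m) -> (#|row_set m| + (bvec0 \in mrows m))%N = n.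
Proof.
move=> uniq_rows; rewrite -[RHS](size_tuple (mrows m)) -(card_uniqP uniq_rows).
rewrite [RHS](cardD1 bvec0) addnC; congr (_ + _)%N.
by apply: eq_card => y; rewrite !inE andbC.
Qed.

Lemma row_set_orbit m1 m2 : uniq (mrows m1) -> uniq (mrows m2) ->
  row_set m1 = row_set m2 -> m2 \in orbit rperm_action setT m1.
Proof.
move=> uniq1 uniq2 eq_set; apply/perm_mrows_orbit/uniq_perm => // y.
have [->|y0] := eqVneq y bvec0; last first.
  by have /setP/(_ y) := eq_set; rewrite !inE y0 !andbT.
have := etrans (card_row_set uniq1) (esym (card_row_set uniq2)).
rewrite eq_set => /addnI.
by case: (bvec0 \in mrows m1); case: (bvec0 \in mrows m2).
Qed.

Lemma row_set_partition m :
  uniq (mrows m) -> row_set m \in set_partitions (colsum m).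
Proof.
move=> uniq_rows; rewrite inE !inE eqxx andbF /=; apply/andP; split.
  apply/forallP => j; rewrite colsum_mrows big_uniq //; apply/eqP.
  rewrite [LHS]big_mkcond [RHS]big_mkcond; apply: eq_bigr => y _; rewrite !inE.
  by have [->|y0] := eqVneq y bvec0; rewrite ?andbF ?andbT ?bvec0E; case: ifP.
case: (bvec0 \in mrows m) (card_row_set uniq_rows) => card_m; apply/orP.
  by right; rewrite -[X in _ == X]card_m addn1.
by left; rewrite -[X in _ == X]card_m addn0.
Qed.

Lemma set_partitions_row_set x S : (\sum_i x i)%N = d ->
  S \in set_partitions x ->
  exists2 m, uniq (mrows m) /\ colsum m = x & row_set m = S.
Proof.
move=> sum_x; rewrite inE => /and3P[S0 /forallP sum_S card_S].
pose r := enum S ++ (if #|S| == n then [::] else [:: bvec0]).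
have sum_r j : (\sum_(v <- r) v j = x j)%N.
  rewrite big_cat big_enum /= (eqP (sum_S j)).
  by case: (#|S| == n); rewrite ?big_cons big_nil ?bvec0E !addn0.
have uniq_r : uniq r.
  rewrite cat_uniq enum_uniq /=; case: (#|S| == n) => //=.
  by rewrite mem_enum orbF andbT.
have [|m rows_m colsum_m] := @exists_mrows n d r x _ sum_x sum_r.
  rewrite size_cat -cardE; case: eqP => [-> | ne_S] /=; first by rewrite addn0.
  by case/orP: card_S => /eqP card_S; [case: ne_S | rewrite addn1].
exists m; first by split; rewrite // rows_m.
apply/setP => y; rewrite inE.
have -> : (y \in mrows m) = (y \in r) by rewrite -rows_m.
rewrite mem_cat mem_enum.
have [->|y0] := eqVneq y bvec0; first by rewrite andbF (negbTE S0).
rewrite andbT; case: (#|S| == n); last by rewrite mem_seq1 (negbTE y0) orbF.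
by rewrite in_nil orbF.
Qed.

Lemma card_uniq_mrows_colsum x : (\sum_i x i)%N = d ->
  #|[set m | (colsum m == x) && uniq (mrows m)]|
    = (n`! * qcount n (fun i => x i : nat))%N.
Proof.
move=> sum_x; set S := [set m | _].
have S_free m : m \in S -> #|stab m| = 1%N.
  by rewrite inE => /andP[_ /astab1_uniq_mrows ->]; rewrite cards1.
rewrite -sum1_card -(eq_bigr _ S_free) sum_card_astab1; last first.
  apply: acts_invariant_set => m s.
  by rewrite /= colsum_rperm (perm_uniq (perm_mrows_rperm m s)).
rewrite card_Sn mulnC (card_orbits_invariant (Phi := row_set)).
- congr (_ * _)%N; rewrite qcountE //; apply: eq_card => T.
  apply/imsetP/idP => [[m]|].
    by rewrite inE => /andP[/eqP <- uniq_rows] ->; apply: row_set_partition.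
  case/set_partitions_row_set => // m [uniq_rows colsum_m] <-.
  by exists m; rewrite // inE colsum_m eqxx.
- by move=> m s; apply: row_set_rperm.
- move=> m1 m2; rewrite !inE => /andP[_ uniq1] /andP[_ uniq2].
  exact: row_set_orbit.
Qed.

End VectorPartitions.

Theorem lemma4 (C : numClosedFieldType) (n d : nat) :
  (0 < n)%N ->
  forall t : 'I_n -> C, (forall i, t i != 0) ->
    @ch_Ind C n d false t = @wsum C n d (pcount n) t /\
    @ch_Ind C n d true t = @wsum C n d (qcount n) t.
Proof.
have C0 : [pchar C] =i pred0 := Num.Theory.pchar_num C.
move=> _ t _; split; apply: (ch_Ind_wsum C0) => x sum_x.
  rewrite -sum_card_astab1_colsum // natr_sum; apply: eq_bigr => m _.
  exact: sumr_const.
under eq_bigr => m _ do rewrite (sum_sign_astab1 C0).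
rewrite -card_uniq_mrows_colsum // -sum1_card natr_sum.
rewrite big_mkcond [RHS]big_mkcond /=.
by apply: eq_bigr => m _; rewrite inE; case: (colsum m == x); case: uniq.
Qed.
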